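(* Let $\mathcal{H}$ be a real Hilbert space and $F:\mathcal{H}\rightrightarrows\mathcal{H}$ a set-valued operator with $\operatorname{zer}F:=\{x:0\in F(x)\}\neq\varnothing$. Let $(\gamma_n)_{n}\subset(0,+\infty)$ and $(\alpha_n)_n\subset[0,1]$. Assume there is a linear map $v:\mathcal{H}\to\mathcal{H}$ such that the pair $(F,v)$ is monotone and, for every $n$, $\gamma_nF+v$ is injective and $\operatorname{ran}v\subset\operatorname{ran}(\gamma_nF+v)$. Let $x_0,x_1\in\mathcal{H}$ and for $n\ge1$ define \[ y_n=x_n+\alpha_n(x_n-x_{n-1}),\qquad x_{n+1}=(\gamma_nF+v)^{-1}\big(v(y_n)\big), \] i.e. $x_{n+1}$ is the unique point with $v(y_n)\in\gamma_nF(x_{n+1})+v(x_{n+1})$. Let $x^*\in\operatorname{zer}F$ and $a_n:=\|v(x_n)-v(x^* )\|^2$. Then for each $n\ge1$, \[ a_{n+1}-a_n-\alpha_n(a_n-a_{n-1})\le(\alpha_n-1)\|v(x_{n+1})-v(x_n)\|^2+2\alpha_n\|v(x_n)-v(x_{n-1})\|^2 . \]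
   Context: For set-valued $F_1,F_2:\mathcal{H}\rightrightarrows\mathcal{H}$, the pair $(F_1,F_2)$ is monotone if $\langle x_1^*-y_1^*,x_2^*-y_2^*\rangle\ge0$ for all $x,y\in\mathcal{H}$, $x_1^*\in F_1(x)$, $y_1^*\in F_1(y)$, $x_2^*\in F_2(x)$, $y_2^*\in F_2(y)$. $\operatorname{ran}$ denotes the range (union of all values). *)

From HB Require Import structures.
From mathcomp Require Import all_boot all_order all_algebra.
From mathcomp Require Import boolp classical_sets reals.
Set Implicit Arguments. Unset Strict Implicit. Unset Printing Implicit Defensive.
Import Order.TTheory GRing.Theory Num.Theory.
Local Open Scope ring_scope.
Local Open Scope classical_set_scope.

Record inner_product (R : realType) (V : lmodType R) := InnerProduct {
  ip :> V -> V -> R;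
  ipC : forall x y, ip x y = ip y x;
  ipDl : forall x y z, ip (x + y) z = ip x z + ip y z;
  ipZl : forall (a : R) x y, ip (a *: x) y = a * ip x y;
  ip_ge0 : forall x, 0 <= ip x x;
  ip_eq0 : forall x, ip x x = 0 -> x = 0
}.

Definition ipnorm (R : realType) (V : lmodType R) (ip : inner_product V) (x : V) : R :=
  Num.sqrt (ip x x).

Definition ip_complete (R : realType) (V : lmodType R) (ip : inner_product V) : Prop :=
  forall u : nat -> V,
    (forall e : R, 0 < e -> exists N : nat, forall m n : nat,
        (N <= m)%N -> (N <= n)%N -> ipnorm ip (u m - u n) < e) ->
    exists l : V, forall e : R, 0 < e -> exists N : nat, forall n : nat,
        (N <= n)%N -> ipnorm ip (u n - l) < e.

Definition setop (V : Type) := V -> set V.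

Definition zer (R : realType) (V : lmodType R) (F : setop V) : set V :=
  [set x | F x 0].

Definition scale_add_op (R : realType) (V : lmodType R) (g : R) (F : setop V)
  (v : V -> V) : setop V :=
  fun x => [set g *: u + v x | u in F x].

Definition setop_injective (V : Type) (F : setop V) : Prop :=
  forall x y z, F x z -> F y z -> x = y.

Definition setop_ran (V : Type) (F : setop V) : set V :=
  [set z | exists x, F x z].

Definition pair_monotone (R : realType) (V : lmodType R) (ip : inner_product V)
  (F1 F2 : setop V) : Prop :=
  forall x y x1 y1 x2 y2, F1 x x1 -> F1 y y1 -> F2 x x2 -> F2 y y2 ->
    0 <= ip (x1 - y1) (x2 - y2).

Definition single (V : Type) (f : V -> V) : setop V := fun x => [set f x].

(* Write y = x_n + alpha_n (x_n - x_(n-1)).  The iteration says that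
   (v y - v x_(n+1)) / gamma_n lies in F x_(n+1), and 0 lies in F x*, so the
   monotonicity of (F, v) gives <v y - v x_(n+1), v x_(n+1) - v x*> >= 0; by
   linearity v y = v x_n + alpha_n (v x_n - v x_(n-1)).  Twice this inequality
   plus alpha_n ||(v x_(n+1) - v x_n) - (v x_n - v x_(n-1))||^2 >= 0 rearranges
   to the claimed estimate. *)

From HB Require Import structures.
From mathcomp Require Import all_boot all_order all_algebra.
From mathcomp Require Import boolp classical_sets reals.
From mathcomp Require Import lra.
Set Implicit Arguments.
Unset Strict Implicit.
Unset Printing Implicit Defensive.
Import Order.TTheory GRing.Theory Num.Theory.
Local Open Scope ring_scope.
Local Open Scope classical_set_scope.

Section InnerProduct.
Variables (R : realType) (H : lmodType R) (ip : inner_product H).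

Lemma ipDr x y z : ip x (y + z) = ip x y + ip x z.
Proof. by rewrite ipC ipDl ![ip _ x]ipC. Qed.

Lemma ipZr (a : R) x y : ip x (a *: y) = a * ip x y.
Proof. by rewrite ipC ipZl ipC. Qed.

Lemma ipNl x y : ip (- x) y = - ip x y.
Proof. by rewrite -scaleN1r ipZl mulN1r. Qed.

Lemma ipNr x y : ip x (- y) = - ip x y.
Proof. by rewrite ipC ipNl ipC. Qed.

Lemma ipnorm_sqr x : ipnorm ip x ^+ 2 = ip x x.
Proof. by rewrite sqr_sqrtr // ip_ge0. Qed.

Lemma inertial_step_estimate (p q r s : H) (al : R) : 0 <= al ->
  0 <= ip (q + al *: (q - r) - p) (p - s) ->
  ip (p - s) (p - s) - ip (q - s) (q - s)
      - al * (ip (q - s) (q - s) - ip (r - s) (r - s))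
    <= (al - 1) * ip (p - q) (p - q) + 2 * al * ip (q - r) (q - r).
Proof.
move=> al_ge0 step.
have curv := mulr_ge0 al_ge0 (ip_ge0 ip (p - q - (q - r))).
move: step curv; rewrite !(ipDl, ipDr, ipNl, ipNr, ipZl, ipZr).
rewrite ?[ip q p]ipC ?[ip r p]ipC ?[ip s p]ipC ?[ip r q]ipC ?[ip s q]ipC
        ?[ip s r]ipC.
lra.
Qed.

Lemma scale_add_op_zer_monotone (g : R) (F : setop H) (v : H -> H) z w xs :
  0 < g -> pair_monotone ip F (single v) -> zer F xs ->
  scale_add_op g F v z w -> 0 <= ip (w - v z) (v z - v xs).
Proof.
move=> g_gt0 mono Fxs [u Fzu <-].
have := mono _ _ _ _ _ _ Fzu Fxs (erefl (v z)) (erefl (v xs)).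
by rewrite subr0 addrK ipZl; apply: mulr_ge0; apply: ltW.
Qed.

End InnerProduct.

Theorem lemma4p1 (R : realType) (H : lmodType R) (ip : inner_product H)
  (Hcomplete : ip_complete ip)
  (F : setop H) (HzerF : zer F !=set0)
  (gamma : nat -> R) (alpha : nat -> R)
  (Hgamma : forall n, 0 < gamma n)
  (Halpha : forall n, 0 <= alpha n <= 1)
  (v : {linear H -> H})
  (Hmono : pair_monotone ip F (single v))
  (Hinj : forall n, setop_injective (scale_add_op (gamma n) F v))
  (Hran : forall n, range v `<=` setop_ran (scale_add_op (gamma n) F v))
  (x : nat -> H)
  (Hiter : forall n, (1 <= n)%N ->
     scale_add_op (gamma n) F v (x n.+1)
       (v (x n + alpha n *: (x n - x n.-1))))
  (xstar : H) (Hxstar : zer F xstar) :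
  let a := fun n => ipnorm ip (v (x n) - v xstar) ^+ 2 in
  forall n, (1 <= n)%N ->
    a n.+1 - a n - alpha n * (a n - a n.-1)
      <= (alpha n - 1) * ipnorm ip (v (x n.+1) - v (x n)) ^+ 2
         + 2 * alpha n * ipnorm ip (v (x n) - v (x n.-1)) ^+ 2.
Proof.
move=> a n n_ge1; rewrite /a !ipnorm_sqr.
have step := scale_add_op_zer_monotone (Hgamma n) Hmono Hxstar (Hiter n n_ge1).
rewrite linearD linearZ linearB /= in step.
by apply: inertial_step_estimate step; case/andP: (Halpha n).
Qed.
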